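(* Let $G$ be a finite simple graph with a clique vertex-partition $\Pi$, and let $t\ge 2$ be an integer. Then $\mathrm{CF}_t(G(\Pi,t))$ is $(t-2)$-decomposable. Consequently, $\mathrm{CF}_t(G(\Pi,t))$ is shellable.
   Context: A clique vertex-partition of $G$ is a collection $\Pi=\{W_1,\dots,W_p\}$ of pairwise disjoint (possibly empty) vertex sets each inducing a clique, whose union is $V(G)$. The $t$-clique whiskering $G(\Pi,t)$ is obtained from $G$ by adding, for each $i$, $t-1$ new distinct vertices $x_{i,1},\dots,x_{i,t-1}$ and making $W_i\cup\{x_{i,1},\dots,x_{i,t-1}\}$ a clique; no other edges are added. $\mathrm{CF}_t(\cdot)$ is the simplicial complex on the vertex set whose faces are the vertex subsets inducing no $t$-clique. For a simplicial complex $\Delta$ on $V$ and face $F$: $\operatorname{link}_\Delta(F)=\{F':F'\cap F=\emptyset,F'\cup F\in\Delta\}$, $\Delta\setminus F=\{H\in\Delta:H\cap F=\emptyset\}$, $\dim F=|F|-1$. A face $\sigma$ is a shedding face if for every $\tau\in\Delta$ with $\sigma\subseteq\tau$ and every $v\in\sigma$ there is $w\in V\setminus\tau$ with $(\tau\cup\{w\})\setminus\{v\}\in\Delta$. $\Delta$ is $k$-decomposable if it is a simplex (including $\emptyset$, $\{\emptyset\}$) or has a shedding face $\sigma$ with $\dim\sigma\le k$ such that $\Delta\setminus\sigma$ and $\operatorname{link}_\Delta(\sigma)$ are $k$-decomposable. $\Delta$ is shellable if its facets admit an order $F_1,\dots,F_s$ such that for all $i<j$ there exist $v\in F_j\setminus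 F_i$ and $\ell<j$ with $F_j\setminus F_\ell=\{v\}$. *)

From mathcomp Require Import all_boot.
Set Implicit Arguments. Unset Strict Implicit. Unset Printing Implicit Defensive.

Definition clique (V : finType) (e : rel V) (A : {set V}) : bool :=
  [forall x in A, forall y in A, (x != y) ==> e x y].

(* Clique vertex-partition Pi = {W_1,...,W_p} (possibly empty blocks). *)
Definition clique_vertex_partition (V : finType) (e : rel V) (p : nat)
    (W : 'I_p -> {set V}) : Prop :=
  (forall i, clique e (W i)) /\
  (forall i j, i != j -> [disjoint W i & W j]) /\
  \bigcup_(i < p) W i = [set: V].

(* The t-clique whiskering G(Pi,t): new vertices x_{i,j}, i < p, j < t-1. *)
Definition whisker_vertex (V : finType) (p t : nat) : finType :=
  (V + ('I_p * 'I_t.-1))%type.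

Definition whisker_edge (V : finType) (e : rel V) (p : nat)
    (W : 'I_p -> {set V}) (t : nat) : rel (whisker_vertex V p t) :=
  fun a b =>
    match a, b with
    | inl u, inl v => e u v
    | inl u, inr x => u \in W x.1
    | inr x, inl u => u \in W x.1
    | inr x, inr y => (x.1 == y.1) && (x.2 != y.2)
    end.

Definition CF (V : finType) (t : nat) (e : rel V) : {set {set V}} :=
  [set F : {set V} | ~~ [exists K : {set V},
      [&& K \subset F, #|K| == t & clique e K]]].

Definition link (V : finType) (D : {set {set V}}) (s : {set V}) : {set {set V}} :=
  [set F in D | [disjoint F & s] && ((F :|: s) \in D)].

Definition deletion (V : finType) (D : {set {set V}}) (s : {set V}) : {set {set V}} :=
  [set H in D | [disjoint H & s]].

Definition shedding_face (V : finType) (D : {set {set V}}) (s : {set V}) : Prop :=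
  forall tau, tau \in D -> s \subset tau -> forall v, v \in s ->
    exists w, w \notin tau /\ ((w |: tau) :\ v) \in D.

(* A simplex, including the void complex and {emptyset}. *)
Definition is_simplex (V : finType) (D : {set {set V}}) : Prop :=
  D = set0 \/ exists F : {set V}, D = powerset F.

(* k-decomposability; dim s = #|s| - 1 <= k  iff  #|s| <= k+1. *)
Inductive k_decomposable (V : finType) (k : nat) : {set {set V}} -> Prop :=
  | kdec_simplex (D : {set {set V}}) : is_simplex D -> k_decomposable k D
  | kdec_shed (D : {set {set V}}) (s : {set V}) : s \in D -> shedding_face D s -> #|s| <= k.+1 ->
      k_decomposable k (deletion D s) -> k_decomposable k (link D s) ->
      k_decomposable k D.

Definition facets (V : finType) (D : {set {set V}}) : {set {set V}} :=
  [set F in D | [forall G in D, (F \subset G) ==> (G == F)]].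

Definition shellable (V : finType) (D : {set {set V}}) : Prop :=
  exists s : seq {set V},
    [/\ uniq s, (forall F, (F \in s) = (F \in facets D)) &
      forall i j, i < j -> j < size s ->
        exists2 v, v \in nth set0 s j :\: nth set0 s i &
          exists2 l, l < j & nth set0 s j :\: nth set0 s l = [set v]].
Arguments whisker_edge [V] e [p] W t _ _.

From mathcomp Require Import all_boot zify.
Set Implicit Arguments. Unset Strict Implicit. Unset Printing Implicit Defensive.

(* Both conclusions follow from vertex decomposability: a shedding vertex is a shedding
   face of dimension 0 <= t - 2, and for a complex closed under subsets a shelling of the
   deletion followed by the cone over a shelling of the link is a shelling.
   The block B_i = W_i + {x_i1, ..., x_i(t-1)} is a clique, and every clique through a
   whisker of B_i lies in B_i; so trading a vertex of B_i for a whisker of B_i missing from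
   a face never creates a t-clique. Hence, while all whiskers are still available, every
   original vertex u of W_i is a shedding vertex: a face containing u and all whiskers of
   B_i would contain the t-clique {u, x_i1, ..., x_i(t-1)}. Once the original vertices are
   gone, a whisker of B_i is a shedding vertex as soon as the remaining whiskers of B_i do
   not all fit into a face; if no block is of this kind, the complex is a simplex. The
   induction runs over the complexes {F <= U | F + S in CF_t}, which are stable under
   deletion and link of a vertex of U. *)

Section Complexes.
Variable T : finType.
Implicit Types (D : {set {set T}}) (A B F G U S : {set T}) (v w : T).

Lemma disjointD1l U S v : [disjoint U & S] -> [disjoint U :\ v & S].
Proof. exact/disjointWl/subsetDl. Qed.

Lemma disjointD1U1 U S v : [disjoint U & S] -> [disjoint U :\ v & v |: S].
Proof.
move=> dUS; rewrite -setI_eq0; apply/eqP/setP => y; rewrite !inE.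
by case: eqVneq => //= _; rewrite andbC; case: (boolP (y \in S)) => // /(disjointFl dUS) ->.
Qed.

Lemma setU1D v A B : v \notin A -> (v |: A) :\: (v |: B) = A :\: B.
Proof.
move=> vA; apply/setP => y; rewrite !inE.
by case: (eqVneq y v) => [->|] //=; rewrite (negbTE vA) andbF.
Qed.

Lemma setU1D_subset v A B : v \notin B -> A \subset B -> (v |: A) :\: B = [set v].
Proof.
move=> vB AB; apply/setP => y; rewrite !inE.
case: (eqVneq y v) => [->|_] /=; first by rewrite vB.
by apply/negbTE/andP => -[/negP yB /(subsetP AB)].
Qed.

Definition subset_closed D := forall A B, B \in D -> A \subset B -> A \in D.

Lemma facetsP D F :
  reflect (F \in D /\ forall G, G \in D -> F \subset G -> G = F) (F \in facets D).
Proof.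
rewrite inE; apply: (iffP andP) => [[FD /forall_inP Fmax]|[FD Fmax]]; split => //.
  by move=> G GD FG; apply/eqP; move: (Fmax G GD); rewrite FG.
by apply/forall_inP => G GD; apply/implyP => FG; rewrite (Fmax G GD FG).
Qed.

Lemma facet_supset D F : F \in D -> exists2 G, G \in facets D & F \subset G.
Proof.
move=> FD; have [|G /andP[GD FG] Gmax] :=
  @arg_maxnP _ F [pred G | (G \in D) && (F \subset G)] (fun G => #|G|).
  by rewrite /= FD subxx.
exists G => //; apply/facetsP; split => // H HD GH.
by apply/eqP; rewrite eq_sym eqEcard GH; apply: Gmax; rewrite /= HD (subset_trans FG GH).
Qed.

Lemma simplex_shellable D : is_simplex D -> shellable D.
Proof.
case=> [->|[F ->]].
  exists [::]; split => // G; rewrite in_nil; apply/esym/negbTE/facetsP.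
  by case; rewrite inE.
exists [:: F]; split => //; last by move=> i [|j] //; rewrite ltnS.
move=> G; rewrite inE; apply/eqP/facetsP => [->|[GD Gmax]].
  split; first by rewrite powersetE.
  by move=> H; rewrite powersetE => HF FH; apply/eqP; rewrite eqEsubset HF FH.
by apply/esym/Gmax; rewrite ?powersetE // -powersetE.
Qed.

Lemma in_deletion1 D v H : (H \in deletion D [set v]) = (H \in D) && (v \notin H).
Proof. by rewrite inE disjoint_sym disjoints1. Qed.

Lemma in_link1 D v H :
  (H \in link D [set v]) = [&& H \in D, v \notin H & v |: H \in D].
Proof. by rewrite inE disjoint_sym disjoints1 setUC. Qed.

Lemma deletion1_subset_closed D v : subset_closed D -> subset_closed (deletion D [set v]).
Proof.
move=> closedD A B; rewrite !in_deletion1 => /andP[BD vB] AB.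
by rewrite (closedD _ _ BD AB); apply: contra vB; apply: (subsetP AB).
Qed.

Lemma link1_subset_closed D v : subset_closed D -> subset_closed (link D [set v]).
Proof.
move=> closedD A B; rewrite !in_link1 => /and3P[BD vB vBD] AB.
rewrite (closedD _ _ BD AB) (closedD _ _ vBD) ?setUS // andbT.
by apply: contra vB; apply: (subsetP AB).
Qed.

Definition shelling_exchange (s : seq {set T}) : Prop :=
  forall i j, i < j -> j < size s ->
    exists2 v, v \in nth set0 s j :\: nth set0 s i &
      exists2 l, l < j & nth set0 s j :\: nth set0 s l = [set v].

(* A shelling of the deletion followed by the cone over a shelling of the link: the
   exchange for a cone facet [v |: G] against a deletion facet uses [v] and a deletion
   facet [F] containing [G], since then [(v |: G) :\: F = [set v]]. *)
Lemma shelling_exchange_cat s1 s2 v :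
  shelling_exchange s1 -> shelling_exchange s2 ->
  {in s1, forall F, v \notin F} -> {in s2, forall G, v \notin G} ->
  {in s2, forall G, exists2 F, F \in s1 & G \subset F} ->
  shelling_exchange (s1 ++ [seq v |: G | G <- s2]).
Proof.
move=> ex1 ex2 v_s1 v_s2 s2_s1 i j ij; rewrite size_cat size_map => js.
set s := _ ++ _.
have nth_s1 k : k < size s1 -> nth set0 s k = nth set0 s1 k by move=> k1; rewrite nth_cat k1.
have nth_s2 k : size s1 <= k < size s1 + size s2 ->
    nth set0 s k = v |: nth set0 s2 (k - size s1).
  by case/andP=> k1 k2; rewrite nth_cat ltnNge k1 (nth_map set0) //; lia.
have [j1|j1] := ltnP j (size s1).
  have [w wij [l lj wl]] := ex1 i j ij j1.
  rewrite !nth_s1 ?(ltn_trans ij j1) //; exists w => //; exists l => //.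
  by rewrite !nth_s1 ?(ltn_trans lj j1).
have j2 : j - size s1 < size s2 by lia.
have vGj := v_s2 _ (mem_nth set0 j2).
rewrite nth_s2 ?j1 //; have [i1|i1] := ltnP i (size s1).
  have vFi := v_s1 _ (mem_nth set0 i1).
  exists v; first by rewrite nth_s1 // !inE eqxx vFi.
  have [F Fs1 GF] := s2_s1 _ (mem_nth set0 j2).
  exists (index F s1); first by rewrite (leq_trans _ j1) // index_mem.
  by rewrite nth_s1 ?index_mem // nth_index // setU1D_subset // v_s1.
have [|w wij [l lj wl]] := ex2 (i - size s1) (j - size s1) _ j2; first by lia.
exists w; first by rewrite nth_s2 ?i1 /= ?setU1D //; lia.
exists (l + size s1); first by lia.
by rewrite nth_s2 ?addnK ?setU1D //; lia.
Qed.

Section SheddingVertex.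
Variables (D : {set {set T}}) (v : T).
Hypothesis closedD : subset_closed D.
Hypothesis shed_v : shedding_face D [set v].

Lemma shedding_vertex_exchange A : v \notin A -> v |: A \in D ->
  exists2 w, w \notin v |: A & w |: A \in D.
Proof.
move=> vA vAD; have [|w [wA wAD]] := shed_v vAD _ (set11 v); first exact: subsetUl.
exists w => //; move: wAD; rewrite setUCA setU1K // !inE negb_or vA andbT.
by apply: contra wA => /eqP <-; apply: setU11.
Qed.

Lemma facet_deletion1 F : F \in facets (deletion D [set v]) -> F \in facets D.
Proof.
case/facetsP; rewrite in_deletion1 => /andP[FD vF] Fmax.
apply/facetsP; split => // G GD FG.
have [vG|vG] := boolP (v \in G); last by apply: Fmax; rewrite // in_deletion1 GD.
have [|w] := shedding_vertex_exchange vF.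
  by apply: closedD GD _; rewrite subUset sub1set vG.
rewrite !inE negb_or => /andP[wv wF] wFD.
suff /setP/(_ w) : w |: F = F by rewrite setU11 (negbTE wF).
by apply: Fmax (subsetUr _ _); rewrite in_deletion1 wFD !inE negb_or eq_sym wv.
Qed.

Lemma facet_link1 G : G \in facets (link D [set v]) -> v |: G \in facets D.
Proof.
case/facetsP; rewrite in_link1 => /and3P[GD vG vGD] Gmax.
apply/facetsP; split => // K KD GK.
have vK : v \in K by apply: (subsetP GK); apply: setU11.
rewrite -(Gmax (K :\ v)) ?setD1K //.
  by rewrite in_link1 setD11 setD1K // KD (closedD KD (subsetDl _ _)).
by rewrite subsetD1 vG andbT (subset_trans (subsetUr _ _) GK).
Qed.

Lemma facets_shedding_vertex F : (F \in facets D) =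
  (F \in facets (deletion D [set v])) || (v \in F) && (F :\ v \in facets (link D [set v])).
Proof.
apply/idP/idP => [/facetsP[FD Fmax]|/orP[/facet_deletion1 //|/andP[vF]]]; last first.
  by move/facet_link1; rewrite setD1K.
have [vF|vF] /= := boolP (v \in F); apply/orP; [right|left].
  apply/facetsP; split.
    by rewrite in_link1 setD11 setD1K // FD (closedD FD (subsetDl _ _)).
  move=> G; rewrite in_link1 => /and3P[GD vG vGD] FG.
  rewrite -(Fmax (v |: G)) ?setU1K //; apply/subsetP => y yF; rewrite !inE.
  by case: (eqVneq y v) => //= yv; apply: (subsetP FG); rewrite !inE yv.
apply/facetsP; split; first by rewrite in_deletion1 FD vF.
by move=> G; rewrite in_deletion1 => /andP[GD _]; apply: Fmax.
Qed.

Lemma link1_sub_deletion_facet G : G \in link D [set v] ->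
  exists2 F, F \in facets (deletion D [set v]) & G \subset F.
Proof.
rewrite in_link1 => /and3P[_ vG vGD].
have [w wvG wGD] := shedding_vertex_exchange vG vGD.
have [|F FD wGF] := @facet_supset (deletion D [set v]) (w |: G).
  by rewrite in_deletion1 wGD !inE negb_or vG andbT; apply: contra wvG => /eqP <-; apply: setU11.
by exists F => //; apply: subset_trans wGF; apply: subsetUr.
Qed.

End SheddingVertex.

Lemma shellable_shedding_vertex D v : subset_closed D -> shedding_face D [set v] ->
  shellable (deletion D [set v]) -> shellable (link D [set v]) -> shellable D.
Proof.
move=> closedD shed [s1 [u1 m1 ex1]] [s2 [u2 m2 ex2]].
have v_s1 : {in s1, forall F, v \notin F}.
  by move=> F; rewrite m1 => /facetsP[]; rewrite in_deletion1 => /andP[].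
have v_s2 : {in s2, forall G, v \notin G}.
  by move=> G; rewrite m2 => /facetsP[]; rewrite in_link1 => /and3P[].
exists (s1 ++ [seq v |: G | G <- s2]); split.
- rewrite cat_uniq u1 map_inj_in_uniq ?u2 ?andbT /=.
    by apply/hasPn => _ /mapP[G _ ->]; apply/negP => /v_s1; rewrite setU11.
  by move=> G1 G2 /v_s2 vG1 /v_s2 vG2 eqG; rewrite -(setU1K vG1) eqG setU1K.
- move=> F; rewrite mem_cat m1 (facets_shedding_vertex closedD shed) -m2.
  congr (_ || _); apply/mapP/andP => [[G Gs2 ->]|[vF Fs2]].
    by rewrite setU11 setU1K ?v_s2.
  by exists (F :\ v); rewrite ?setD1K.
- apply: shelling_exchange_cat => // G; rewrite m2 => /facetsP[Gl _].
  by have [F] := link1_sub_deletion_facet shed Gl; rewrite -m1; exists F.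
Qed.

Inductive vertex_decomposable : {set {set T}} -> Prop :=
| vdec_simplex D : is_simplex D -> vertex_decomposable D
| vdec_shed D v : [set v] \in D -> shedding_face D [set v] ->
    vertex_decomposable (deletion D [set v]) -> vertex_decomposable (link D [set v]) ->
    vertex_decomposable D.

Lemma vertex_decomposable_k_decomposable k D :
  vertex_decomposable D -> k_decomposable k D.
Proof.
elim=> {D} [D /kdec_simplex //|D v vD shed _ kdel _ klink].
by apply: (kdec_shed vD shed) => //; rewrite cards1.
Qed.

Lemma vertex_decomposable_shellable D :
  subset_closed D -> vertex_decomposable D -> shellable D.
Proof.
move=> + vdD; elim: vdD => {D} [D /simplex_shellable //|D v _ shed _ sh_del _ sh_link closedD].
apply: shellable_shedding_vertex shed _ _ => //.
  exact/sh_del/deletion1_subset_closed.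
exact/sh_link/link1_subset_closed.
Qed.

End Complexes.

Section CliqueComplex.
Variables (T : finType) (E : rel T) (t : nat).
Implicit Types (A B F K U S : {set T}) (v : T).

Lemma clique_edge K x y : clique E K -> x \in K -> y \in K -> x != y -> E x y.
Proof. by move=> /forall_inP/(_ x) Kc xK yK; move/forall_inP/(_ y yK)/implyP: (Kc xK); apply. Qed.

Lemma cliqueS A B : A \subset B -> clique E B -> clique E A.
Proof.
move=> AB Bc; apply/forall_inP => x xA; apply/forall_inP => y yA; apply/implyP.
exact: clique_edge Bc (subsetP AB x xA) (subsetP AB y yA).
Qed.

Lemma CFP A :
  reflect (forall K, K \subset A -> clique E K -> #|K| != t) (A \in CF t E).
Proof.
rewrite inE; apply: (iffP idP) => [noK K KA Kc|noK].
  by apply: contra noK => Kt; apply/existsP; exists K; rewrite KA Kt.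
by apply/existsP => -[K /and3P[KA Kt Kc]]; case/negP: (noK K KA Kc).
Qed.

Lemma CF_subset_closed : subset_closed (CF t E).
Proof. by move=> A B /CFP noK AB; apply/CFP => K KA; apply/noK/(subset_trans KA). Qed.

(* For disjoint [U] and [S], the link of [S] in the restriction of [CF t E] to [U :|: S]. *)
Definition relCF U S : {set {set T}} :=
  [set F : {set T} | (F \subset U) && (F :|: S \in CF t E)].

Lemma in_relCF U S F : (F \in relCF U S) = (F \subset U) && (F :|: S \in CF t E).
Proof. by rewrite inE. Qed.

Lemma CF_relCF : CF t E = relCF setT set0.
Proof. by apply/setP => F; rewrite in_relCF subsetT setU0. Qed.

Lemma relCF_deletion1 U S v : deletion (relCF U S) [set v] = relCF (U :\ v) S.
Proof.
apply/setP => F; rewrite in_deletion1 !in_relCF subsetD1.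
by rewrite -!andbA [X in _ && X]andbC.
Qed.

Lemma relCF_link1 U S v : v \in U -> link (relCF U S) [set v] = relCF (U :\ v) (v |: S).
Proof.
move=> vU; apply/setP => F; rewrite in_link1 !in_relCF subsetD1 subUset sub1set vU.
rewrite setUCA setUA; apply/idP/idP => [/and3P[/andP[FU _] vF /andP[_ vFS]]|].
  by rewrite FU vF vFS.
case/andP=> /andP[FU vF] vFS; rewrite FU vF vFS /= andbT.
by apply: CF_subset_closed vFS _; rewrite setSU // subsetUr.
Qed.

Lemma relCF_D1 U S v : v |: S \notin CF t E -> relCF U S = relCF (U :\ v) S.
Proof.
move=> vS; apply/setP => F; rewrite !in_relCF subsetD1.
case: (boolP (v \in F)) => vF; last by rewrite andbT.
rewrite andbF /=; apply/negbTE; apply: contra vS => /andP[_ FS].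
by apply: CF_subset_closed FS _; rewrite setSU // sub1set.
Qed.

Lemma relCF_eq0 U S : S \notin CF t E -> relCF U S = set0.
Proof.
move=> S_CF; apply/setP => F; rewrite in_relCF in_set0; apply: contraNF S_CF => /andP[_ FS].
by apply: CF_subset_closed FS _; rewrite subsetUr.
Qed.

Lemma relCF_powerset U S : U :|: S \in CF t E -> relCF U S = powerset U.
Proof.
move=> US; apply/setP => F; rewrite in_relCF powersetE.
by case: (boolP (F \subset U)) => //= FU; apply: CF_subset_closed US _; rewrite setSU.
Qed.

End CliqueComplex.

Section Whiskering.
Variables (V : finType) (e : rel V) (p : nat) (W : 'I_p -> {set V}) (t : nat).
Hypothesis clique_W : forall i, clique e (W i).
Local Notation vertex := (whisker_vertex V p t).
Local Notation E := (whisker_edge e W t).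
Implicit Types (A K U S : {set vertex}) (v w x : vertex).

Definition whiskers i : {set vertex} := [set inr (i, j) | j : 'I_t.-1].

Definition block i : {set vertex} := inl @: W i :|: whiskers i.

Lemma in_whiskers i x : (x \in whiskers i) = if x is inr y then y.1 == i else false.
Proof.
apply/imsetP/idP => [[j _ ->] //|].
by case: x => // [[i' j]] /= /eqP ->; exists j.
Qed.

Lemma in_block i x :
  (x \in block i) = if x is inl u then u \in W i else x \in whiskers i.
Proof.
rewrite in_setU; case: x => [u|y]; rewrite in_whiskers ?orbF //=.
  by apply/imsetP/idP => [[u' u'W [->]] //|uW]; exists u.
by rewrite orbC; case: (y.1 == i) => //=; apply/negbTE/imsetP => -[].
Qed.

Lemma card_whiskers i : #|whiskers i| = t.-1.
Proof. by rewrite card_imset ?card_ord // => j1 j2 []. Qed.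

Lemma clique_block i : clique E (block i).
Proof.
apply/forall_inP => x; rewrite in_block => xi; apply/forall_inP => y; rewrite in_block => yi.
apply/implyP; case: x y xi yi => [u|[i1 j1]] [u'|[i2 j2]]; rewrite ?in_whiskers //=.
- by move=> uW u'W uu'; apply: (clique_edge (clique_W i)) => //; apply: contra uu' => /eqP ->.
- by move=> uW /eqP ->.
- by move=> /eqP ->.
- by move=> /eqP -> /eqP -> ij; rewrite eqxx; apply: contra ij => /eqP ->.
Qed.

Lemma whisker_clique_block K y : clique E K -> inr y \in K -> K \subset block y.1.
Proof.
move=> Kc yK; apply/subsetP => x xK; have [<-|yx] := eqVneq (inr y) x.
  by rewrite in_block in_whiskers.
move: (clique_edge Kc yK xK yx); rewrite in_block.
by case: x {xK yx} => [u|z] //=; rewrite in_whiskers => /andP[/eqP ->].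
Qed.

(* A clique through the new whisker [w] lies in the clique [block i]; trading [w] back
   for [x] gives a clique of the same size inside [A]. *)
Lemma CF_exchange_whisker i A w x : A \in CF t E -> w \in whiskers i ->
  x \in block i -> x \in A -> (w |: A) :\ x \in CF t E.
Proof.
move=> /CFP noK wi xi xA; apply/CFP => K KwA Kc; apply/negP => /eqP Kt.
have [wK|wK] := boolP (w \in K); last first.
  suff KA : K \subset A by move: (noK K KA Kc); rewrite Kt eqxx.
  apply/subsetP => y yK; move: (subsetP KwA y yK); rewrite !inE => /andP[_ /orP[/eqP yw|//]].
  by rewrite -yw yK in wK.
have Ki : K \subset block i.
  by move: wi wK; rewrite in_whiskers; case: w {KwA} => // y /eqP <-; apply: whisker_clique_block.
have xK : x \notin K by apply/negP => /(subsetP KwA); rewrite !inE eqxx.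
have K'A : x |: (K :\ w) \subset A.
  rewrite subUset sub1set xA; apply/subsetP => y; rewrite !inE => /andP[yw /(subsetP KwA)].
  by rewrite !inE (negbTE yw) => /andP[].
move: (noK _ K'A); rewrite (cliqueS _ (clique_block i)); last first.
  by rewrite subUset sub1set xi (subset_trans (subsetDl _ _) Ki).
rewrite (cardsD1 w K) wK in Kt.
by rewrite cardsU1 !inE negb_and negbK xK orbT Kt eqxx => /(_ isT).
Qed.

Lemma relCF_shedding i U S v : [disjoint U & S] -> v \in block i ->
  (forall tau, tau \in relCF E t U S -> v \in tau ->
     exists2 w, w \in whiskers i :&: U & w \notin tau) ->
  shedding_face (relCF E t U S) [set v].
Proof.
move=> dUS vi avail tau tauD; rewrite sub1set => vtau v'; rewrite inE => /eqP ->.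
have [w /setIP[wi wU] wtau] := avail tau tauD vtau.
exists w; split => //; move: tauD; rewrite !in_relCF => /andP[tauU tauS].
have vS : v \notin S by rewrite (disjointFr dUS) // (subsetP tauU).
apply/andP; split.
  by rewrite (subset_trans (subsetDl _ _)) // subUset sub1set wU tauU.
have -> : (w |: tau) :\ v :|: S = (w |: (tau :|: S)) :\ v.
  by apply/setP => y; rewrite !inE orbA; case: eqVneq => // ->; rewrite (negbTE vS).
by apply: (CF_exchange_whisker tauS wi vi); rewrite inE vtau.
Qed.

Lemma vertex_decomposable_relCF_step i U S v : [disjoint U & S] -> v \in U ->
  v \in block i ->
  (forall tau, tau \in relCF E t U S -> v \in tau ->
     exists2 w, w \in whiskers i :&: U & w \notin tau) ->
  vertex_decomposable (relCF E t (U :\ v) S) ->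
  vertex_decomposable (relCF E t (U :\ v) (v |: S)) ->
  vertex_decomposable (relCF E t U S).
Proof.
move=> dUS vU vi avail vd_del vd_link.
have [vS|vS] := boolP (v |: S \in CF t E); last by rewrite (relCF_D1 _ vS).
apply: (vdec_shed (v := v)); first by rewrite in_relCF sub1set vU.
- exact: relCF_shedding dUS vi avail.
- by rewrite relCF_deletion1.
- by rewrite relCF_link1.
Qed.

Lemma CF_whiskers_setU U S : (forall u, inl u \notin U) -> S \in CF t E ->
  (forall i, whiskers i :&: U :|: S \in CF t E) -> U :|: S \in CF t E.
Proof.
move=> noU S_CF allin; apply/CFP => K KUS Kc.
have [KS|/subsetPn[y yK yS]] := boolP (K \subset S); first by move/CFP: S_CF; apply.
have yU : y \in U by move: (subsetP KUS y yK); rewrite in_setU (negbTE yS) orbF.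
case: y yK yU {yS} => [u _|z zK _]; first by rewrite (negbTE (noU u)).
move/CFP: (allin z.1); apply => //; apply/subsetP => k kK; rewrite !inE.
have [_|kS] := boolP (k \in S); rewrite ?orbT ?orbF //.
have kU : k \in U by move: (subsetP KUS k kK); rewrite in_setU (negbTE kS) orbF.
move: (subsetP (whisker_clique_block Kc zK) k kK); rewrite in_block kU andbT.
by case: k {kK kS} kU => // u; rewrite (negbTE (noU u)).
Qed.

Lemma vertex_decomposable_relCF_whiskers U S : [disjoint U & S] ->
  (forall u, inl u \notin U) -> vertex_decomposable (relCF E t U S).
Proof.
elim: {U}_.+1 {-2}U (ltnSn #|U|) S => // n IH U Un S dUS noU.
have [S_CF|S_CF] := boolP (S \in CF t E); last first.
  by rewrite relCF_eq0 //; apply: vdec_simplex; left.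
have [/existsP[i iN]|/existsPn allin] :=
  boolP [exists i, whiskers i :&: U :|: S \notin CF t E]; last first.
  rewrite relCF_powerset; first by apply: vdec_simplex; right; exists U.
  by apply: CF_whiskers_setU => // i; rewrite -[_ \in _]negbK allin.
have [X0|[x /setIP[xi xU]]] := set_0Vmem (whiskers i :&: U).
  by rewrite X0 set0U S_CF in iN.
have Ux : #|U :\ x| < n := leq_trans (proper_card (properD1 xU)) Un.
have noUx u : inl u \notin U :\ x by rewrite !inE negb_and noU orbT.
apply: (vertex_decomposable_relCF_step (i := i) dUS xU).
- by rewrite in_block; case: x xi {xU Ux noUx} => // u; rewrite in_whiskers.
- move=> tau; rewrite in_relCF => /andP[_ tauS] _.
  apply/exists_inP; apply: contraR iN => /exists_inPn iU.
  by apply: CF_subset_closed tauS _; apply/setSU/subsetP => w /iU; rewrite negbK.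
- exact: IH (disjointD1l _ dUS) noUx.
- exact: IH (disjointD1U1 _ dUS) noUx.
Qed.

Hypothesis W_cover : forall u, exists i, u \in W i.
Hypothesis t_gt0 : 0 < t.

Lemma relCF_missing_whisker i U S u tau : (forall y, inr y \in U :|: S) ->
  u \in W i -> tau \in relCF E t U S -> inl u \in tau ->
  exists2 w, w \in whiskers i :&: U & w \notin tau.
Proof.
move=> allS uW; rewrite in_relCF => /andP[_ tauS] utau.
apply/exists_inP; apply: contraLR tauS => /exists_inPn iU; apply/CFP.
have uiK : inl u |: whiskers i \subset tau :|: S.
  rewrite subUset sub1set inE utau; apply/subsetP => w wi; rewrite in_setU.
  have := wi; rewrite in_whiskers; case: w wi => // y wi _.
  move: (allS y) (iU (inr y)); rewrite !inE wi /= negbK.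
  by case/orP => [yU /(_ yU) ->|-> _]; rewrite ?orbT.
move=> /(_ _ uiK); rewrite (cliqueS _ (clique_block i)); last first.
  by rewrite subUset sub1set in_block uW subsetUr.
rewrite cardsU1 card_whiskers in_whiskers add1n prednK //.
by rewrite eqxx => /(_ isT).
Qed.

Lemma vertex_decomposable_relCF U S : [disjoint U & S] ->
  (forall y, inr y \in U :|: S) -> vertex_decomposable (relCF E t U S).
Proof.
elim: {U}_.+1 {-2}U (ltnSn #|U|) S => // n IH U Un S dUS allS.
have [/existsP[u uU]|/existsPn noU] := boolP [exists u, inl u \in U]; last first.
  exact: vertex_decomposable_relCF_whiskers.
have [i uW] := W_cover u.
have Uu : #|U :\ inl u| < n := leq_trans (proper_card (properD1 uU)) Un.
apply: (vertex_decomposable_relCF_step (i := i) dUS uU); first by rewrite in_block.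
- by move=> tau; apply: relCF_missing_whisker.
- by apply: IH (disjointD1l _ dUS) _ => // y; move: (allS y); rewrite !inE.
- by apply: IH (disjointD1U1 _ dUS) _ => // y; move: (allS y); rewrite !inE orbCA orbA => ->.
Qed.

End Whiskering.

Theorem theorem4p9 (V : finType) (e : rel V)
    (e_sym : symmetric e) (e_irr : irreflexive e)
    (p : nat) (W : 'I_p -> {set V})
    (hW : clique_vertex_partition e W) (t : nat) (ht : 2 <= t) :
  k_decomposable (t - 2) (CF t (whisker_edge e W t)) /\
  shellable (CF t (whisker_edge e W t)).
Proof.
case: hW => clique_W [_ cover_W].
have W_cover u : exists i, u \in W i.
  have /bigcupP[i _ uWi] : u \in \bigcup_(i < p) W i by rewrite cover_W inE.
  by exists i.
have vdCF : vertex_decomposable (CF t (whisker_edge e W t)).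
  rewrite CF_relCF; apply: vertex_decomposable_relCF => //; first exact: ltnW.
    by rewrite -setI_eq0 setI0.
  by move=> y; rewrite !inE.
split; first exact: vertex_decomposable_k_decomposable.
exact: vertex_decomposable_shellable (@CF_subset_closed _ _ _) vdCF.
Qed.
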